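(* Let $p,q$ be integers with $2\le p<q\le5p-1$ and fix $\beta_3\ge0$. Let $r_{\beta_3}$ be the transition curve: for $\beta_1<\beta_1^c$, $r_{\beta_3}(\beta_1)$ is the unique value of $\beta_2$ for which $u\mapsto l(u)=\beta_1u+\beta_2u^p+\beta_3u^q-\tfrac12u\log u-\tfrac12(1-u)\log(1-u)$ has two distinct global maximizers on $[0,1]$. Then $$\lim_{\beta_1\to-\infty}\big|r_{\beta_3}(\beta_1)+\beta_1+\beta_3\big|=0.$$
   Context: Here $\beta_1^c=\tfrac12\log\tfrac{u_0}{1-u_0}-\tfrac{1}{2(p-1)(1-u_0)}+\tfrac{pu_0-(p-1)}{2(p-1)(q-1)(1-u_0)^2}$, where $u_0\in(0,1)$ is the unique solution of $\beta_3=\frac{pu_0-(p-1)}{2q(q-1)(q-p)u_0^{q-1}(1-u_0)^2}$; existence and uniqueness of $r_{\beta_3}(\beta_1)$ for each $\beta_1<\beta_1^c$ is part of the standing setup. *)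

From Stdlib Require Import Reals Lra.
Open Scope R_scope.

Definition xlogx (x : R) : R := if Req_EM_T x 0 then 0 else x * ln x.

Definition lfun (p q : nat) (b1 b2 b3 u : R) : R :=
  b1 * u + b2 * u ^ p + b3 * u ^ q - / 2 * xlogx u - / 2 * xlogx (1 - u).

Definition is_global_max01 (f : R -> R) (u : R) : Prop :=
  0 <= u <= 1 /\ forall v, 0 <= v <= 1 -> f v <= f u.

Definition two_global_max (p q : nat) (b1 b2 b3 : R) : Prop :=
  exists u1 u2, u1 <> u2 /\
    is_global_max01 (lfun p q b1 b2 b3) u1 /\
    is_global_max01 (lfun p q b1 b2 b3) u2.

Definition beta1c (p q : nat) (u0 : R) : R :=
  / 2 * ln (u0 / (1 - u0))
  - / (2 * (INR p - 1) * (1 - u0))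
  + (INR p * u0 - (INR p - 1)) / (2 * (INR p - 1) * (INR q - 1) * (1 - u0) ^ 2).

Definition u0_eq (p q : nat) (b3 u0 : R) : Prop :=
  b3 = (INR p * u0 - (INR p - 1)) /
       (2 * INR q * (INR q - 1) * (INR q - INR p) * u0 ^ (q - 1) * (1 - u0) ^ 2).

(* Write l = poly + ent, where poly(u) = b1 u + b2 u^p + b3 u^q and ent is the
   (halved) binary entropy.  With K = -b1 large and s = b1 + b2 + b3 = l(1) - l(0),
   we show that for every e > 0 and K large enough, two distinct global
   maximizers force |s| <= e.
   1. Elementary inequalities for ln, exp and powers on [0,1].
   2. ent has infinite slope at 0 and 1 while poly is Lipschitz, so every
      global maximizer is interior; hence it is a critical point of l.
   3. Between two critical points u1 < u2 the entropy term makes l' drop by at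
      least (u2-u1)(1/(2 u2) + 1/(2(1-u1))), while the polynomial part can raise
      it by at most (u2-u1)(p(p-1) b2^+ + q(q-1) b3); this bounds 1/u2 and 1/(1-u1).
   4. Localization: if exp(-K) < -s 2^-p, any u with l(u) >= l(0) satisfies
      u <= exp(1-K); if exp(-K) < s, any u with l(u) >= l(1) satisfies
      1-u <= exp(1-K-2s).
   5. For K large these two facts contradict step 3, which gives |s| <= e;
      corollary4 follows since (beta1, r(beta1), beta3) has two maximizers. *)
From Stdlib Require Import Reals Lra Lia.
From Coquelicot Require Import Coquelicot.
Open Scope R_scope.

Lemma ln_le_sub1 y : 0 < y -> ln y <= y - 1.
Proof.
  intros Hy. pose proof (exp_ineq1_le (ln y)) as H.
  rewrite exp_ln in H; lra.
Qed.

Lemma exp_monotone x y : x <= y -> exp x <= exp y.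
Proof. intros [Hlt | ->]; [left; apply exp_increasing |]; lra. Qed.

Lemma exp_le_inv w a : 0 < w -> a <= - ln w -> exp a <= / w.
Proof.
  intros Hw Ha. replace (/ w) with (exp (- ln w)) by (rewrite exp_Ropp, exp_ln; lra).
  now apply exp_monotone.
Qed.

Lemma shifted_xlnx_max w K : 0 < w -> w * (1 - K - ln w) <= exp (- K).
Proof.
  intros Hw.
  assert (Hy : 0 < exp (- K) / w) by (apply Rdiv_lt_0_compat; [apply exp_pos | lra]).
  pose proof (ln_le_sub1 _ Hy) as H.
  rewrite ln_div, ln_exp in H by (try apply exp_pos; lra).
  assert (Hm : w * (- K - ln w) <= w * (exp (- K) / w - 1))
    by (apply Rmult_le_compat_l; lra).
  replace (w * (exp (- K) / w - 1)) with (exp (- K) - w) in Hm by (field; lra).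
  lra.
Qed.

Lemma xlnx_ge x : 0 < x -> x - 1 <= x * ln x.
Proof.
  intros Hx. pose proof (shifted_xlnx_max x 0 Hx) as H.
  rewrite Ropp_0, exp_0 in H. lra.
Qed.

Lemma ln_gap u v : 0 < u -> u <= v -> (v - u) / v <= ln v - ln u.
Proof.
  intros Hu Huv.
  pose proof (ln_le_sub1 (u / v) ltac:(apply Rdiv_lt_0_compat; lra)) as H.
  rewrite ln_div in H by lra.
  replace ((v - u) / v) with (- (u / v - 1)) by (field; lra). lra.
Qed.

Lemma pow_unit n x : 0 <= x <= 1 -> 0 <= x ^ n <= 1.
Proof. intros H. induction n; simpl; nra. Qed.

Lemma pow_antitone u m n : 0 <= u <= 1 -> (m <= n)%nat -> u ^ n <= u ^ m.
Proof.
  intros Hu Hmn. replace n with (m + (n - m))%nat by lia.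
  rewrite pow_add. pose proof (pow_unit m u Hu). pose proof (pow_unit (n - m) u Hu). nra.
Qed.

Lemma pow_lipschitz m u v : 0 <= u -> u <= v -> v <= 1 -> v ^ m - u ^ m <= INR m * (v - u).
Proof.
  intros Hu Huv Hv. induction m as [|m IH]; [simpl; lra |].
  rewrite S_INR; simpl.
  pose proof (pow_unit m u ltac:(lra)). pose proof (pow_incr u v m ltac:(lra)).
  pose proof (pos_INR m).
  assert (v * (v ^ m - u ^ m) <= INR m * (v - u)) by nra.
  nra.
Qed.

Lemma pow_gap p u : (2 <= p)%nat -> 0 <= u <= 1 -> u * (1 - u) <= u - u ^ p.
Proof. intros Hp Hu. pose proof (pow_antitone u 2 p Hu Hp). simpl in *. nra. Qed.

Lemma scaled_pow_drop (k a : nat) (b u v : R) : 0 <= u -> u <= v -> v <= 1 ->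
  - (INR k * INR a * Rmax b 0 * (v - u)) <= INR k * b * (u ^ a - v ^ a).
Proof.
  intros Hu Huv Hv.
  pose proof (pow_lipschitz a u v Hu Huv Hv). pose proof (pow_incr u v a ltac:(lra)).
  pose proof (pos_INR k). pose proof (pos_INR a).
  unfold Rmax; destruct (Rle_dec b 0).
  - assert (0 <= b * (u ^ a - v ^ a)) by nra. nra.
  - assert (b * (v ^ a - u ^ a) <= b * (INR a * (v - u))) by (apply Rmult_le_compat_l; lra).
    nra.
Qed.

Definition poly (p q : nat) (b1 b2 b3 u : R) : R := b1 * u + b2 * u ^ p + b3 * u ^ q.

Definition ent (u : R) : R := - / 2 * xlogx u - / 2 * xlogx (1 - u).

Lemma lfun_decomp p q b1 b2 b3 u : lfun p q b1 b2 b3 u = poly p q b1 b2 b3 u + ent u.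
Proof. unfold lfun, poly, ent. ring. Qed.

Lemma xlogx_pos x : 0 < x -> xlogx x = x * ln x.
Proof. intros Hx. unfold xlogx. destruct (Req_EM_T x 0); [lra | reflexivity]. Qed.

Lemma ent_sym u : ent (1 - u) = ent u.
Proof. unfold ent. replace (1 - (1 - u)) with u by ring. ring. Qed.

Lemma ent_0 : ent 0 = 0.
Proof.
  unfold ent, xlogx. replace (1 - 0) with 1 by ring.
  destruct (Req_EM_T 0 0); [| lra]. destruct (Req_EM_T 1 0); [lra |].
  rewrite ln_1. ring.
Qed.

Lemma ent_1 : ent 1 = 0.
Proof. rewrite <- ent_sym, Rminus_diag. exact ent_0. Qed.

Lemma ent_ge_left u : 0 < u < 1 -> - / 2 * (u * ln u) <= ent u.
Proof.
  intros Hu. unfold ent. rewrite !xlogx_pos by lra.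
  pose proof (ln_le (1 - u) 1 ltac:(lra) ltac:(lra)). rewrite ln_1 in *.
  assert ((1 - u) * ln (1 - u) <= 0) by nra. lra.
Qed.

Lemma ent_le_linear u : 0 < u < 1 -> ent u <= / 2 * u * (1 - ln u).
Proof.
  intros Hu. unfold ent. rewrite !xlogx_pos by lra.
  pose proof (xlnx_ge (1 - u) ltac:(lra)). lra.
Qed.

Lemma ent_le_shift u K : 0 < u < 1 -> ent u <= / 2 * K * u + / 2 * exp (- K).
Proof.
  intros Hu. pose proof (ent_le_linear u Hu). pose proof (shifted_xlnx_max u K ltac:(lra)).
  lra.
Qed.

Lemma poly_lipschitz p q b1 b2 b3 u v : 0 <= u -> u <= v -> v <= 1 ->
  Rabs (poly p q b1 b2 b3 v - poly p q b1 b2 b3 u)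
  <= (Rabs b1 + INR p * Rabs b2 + INR q * Rabs b3) * (v - u).
Proof.
  intros Hu Huv Hv.
  assert (Hterm : forall (b : R) (n : nat),
             Rabs (b * (v ^ n - u ^ n)) <= INR n * Rabs b * (v - u)).
  { intros b n. pose proof (pow_incr u v n ltac:(lra)) as Hinc.
    pose proof (pow_lipschitz n u v Hu Huv Hv). pose proof (Rabs_pos b).
    rewrite Rabs_mult, (Rabs_pos_eq (v ^ n - u ^ n)) by lra. nra. }
  replace (poly p q b1 b2 b3 v - poly p q b1 b2 b3 u)
    with (b1 * (v - u) + b2 * (v ^ p - u ^ p) + b3 * (v ^ q - u ^ q)) by (unfold poly; ring).
  eapply Rle_trans; [apply Rabs_triang |].
  eapply Rle_trans; [apply Rplus_le_compat_r, Rabs_triang |].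
  rewrite Rabs_mult, (Rabs_pos_eq (v - u)) by lra.
  pose proof (Hterm b2 p). pose proof (Hterm b3 q). lra.
Qed.

Lemma poly_at_0 p q b1 b2 b3 : (1 <= p)%nat -> (1 <= q)%nat -> poly p q b1 b2 b3 0 = 0.
Proof. intros Hp Hq. unfold poly. rewrite !pow_i by lia. ring. Qed.

Lemma lfun_at_0 p q b1 b2 b3 : (1 <= p)%nat -> (1 <= q)%nat -> lfun p q b1 b2 b3 0 = 0.
Proof. intros Hp Hq. rewrite lfun_decomp, poly_at_0, ent_0 by assumption. ring. Qed.

Lemma ent_beats_linear L : 0 <= L -> exists h, 0 < h < 1 /\ L * h < ent h.
Proof.
  intros HL. set (h := exp (- (2 * (L + 1)))). exists h.
  assert (Hh0 : 0 < h) by apply exp_pos.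
  assert (Hh1 : h < 1).
  { pose proof (exp_increasing (- (2 * (L + 1))) 0 ltac:(lra)) as H. now rewrite exp_0 in H. }
  split; [lra |].
  pose proof (ent_ge_left h ltac:(lra)) as H. unfold h at 2 in H. rewrite ln_exp in H.
  lra.
Qed.

(* Global maximizers of l avoid the endpoints, where the entropy slope is infinite. *)
Lemma max_interior p q b1 b2 b3 u : (1 <= p)%nat -> (1 <= q)%nat ->
  is_global_max01 (lfun p q b1 b2 b3) u -> 0 < u < 1.
Proof.
  intros Hp Hq [Hu Hmax].
  set (L := Rabs b1 + INR p * Rabs b2 + INR q * Rabs b3).
  assert (HL : 0 <= L).
  { pose proof (pos_INR p). pose proof (pos_INR q).
    pose proof (Rabs_pos b1). pose proof (Rabs_pos b2). pose proof (Rabs_pos b3).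
    unfold L. nra. }
  destruct (ent_beats_linear L HL) as (h & Hh & Hent).
  destruct (Req_dec u 0) as [-> | Hu0].
  - pose proof (Hmax h ltac:(lra)) as Hle. rewrite !lfun_decomp, ent_0 in Hle.
    pose proof (poly_lipschitz p q b1 b2 b3 0 h ltac:(lra) ltac:(lra) ltac:(lra)) as Hlip.
    fold L in Hlip. rewrite Rabs_minus_sym, Rminus_0_r in Hlip.
    pose proof (Rle_abs (poly p q b1 b2 b3 0 - poly p q b1 b2 b3 h)).
    rewrite poly_at_0 in * by assumption. lra.
  - destruct (Req_dec u 1) as [-> | Hu1]; [| lra].
    pose proof (Hmax (1 - h) ltac:(lra)) as Hle. rewrite !lfun_decomp, ent_sym, ent_1 in Hle.
    pose proof (poly_lipschitz p q b1 b2 b3 (1 - h) 1 ltac:(lra) ltac:(lra) ltac:(lra)) as Hlip.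
    fold L in Hlip. replace (1 - (1 - h)) with h in Hlip by ring.
    pose proof (Rle_abs (poly p q b1 b2 b3 1 - poly p q b1 b2 b3 (1 - h))). lra.
Qed.

Definition dlfun (p q : nat) (b1 b2 b3 u : R) : R :=
  b1 + INR p * b2 * u ^ (pred p) + INR q * b3 * u ^ (pred q) - / 2 * ln u + / 2 * ln (1 - u).

Lemma lfun_derive p q b1 b2 b3 u : 0 < u < 1 ->
  is_derive (lfun p q b1 b2 b3) u (dlfun p q b1 b2 b3 u).
Proof.
  intros Hu.
  apply is_derive_ext_loc with (f := fun x =>
    b1 * x + b2 * x ^ p + b3 * x ^ q - / 2 * (x * ln x) - / 2 * ((1 - x) * ln (1 - x))).
  - assert (Hr : 0 < Rmin u (1 - u)) by (apply Rmin_pos; lra).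
    exists (mkposreal _ Hr). intros y Hy.
    unfold ball in Hy; simpl in Hy; unfold AbsRing_ball, abs, minus, plus, opp in Hy; simpl in Hy.
    apply Rabs_def2 in Hy. pose proof (Rmin_l u (1 - u)). pose proof (Rmin_r u (1 - u)).
    unfold lfun. rewrite !xlogx_pos by lra. reflexivity.
  - unfold dlfun. auto_derive; [lra |].
    replace (1 + - u) with (1 - u) by ring. field. lra.
Qed.

Lemma critical_point p q b1 b2 b3 u : 0 < u < 1 -> is_global_max01 (lfun p q b1 b2 b3) u ->
  dlfun p q b1 b2 b3 u = 0.
Proof.
  intros Hu [_ Hmax].
  pose proof (proj1 (is_derive_Reals _ _ _) (lfun_derive p q b1 b2 b3 u Hu)) as Hd.
  pose (pr := exist _ _ Hd : derivable_pt (lfun p q b1 b2 b3) u).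
  change (dlfun p q b1 b2 b3 u) with (derive_pt _ _ pr).
  apply (deriv_maximum _ 0 1 u pr); [lra | lra |].
  intros v Hv0 Hv1. apply Hmax. lra.
Qed.

(* Two critical points u < v of l cannot lie close to 0 and 1 respectively: the
   entropy part of l' decreases faster than the polynomial part can increase. *)
Lemma critical_points_gap p q b1 b2 b3 u v : 0 <= b3 -> 0 < u < v -> v < 1 ->
  dlfun p q b1 b2 b3 u = 0 -> dlfun p q b1 b2 b3 v = 0 ->
  / 2 * / v + / 2 * / (1 - u)
  <= INR p * INR (pred p) * Rmax b2 0 + INR q * INR (pred q) * b3.
Proof.
  intros Hb3 Huv Hv Du Dv.
  pose proof (scaled_pow_drop p (pred p) b2 u v ltac:(lra) ltac:(lra) ltac:(lra)).
  pose proof (scaled_pow_drop q (pred q) b3 u v ltac:(lra) ltac:(lra) ltac:(lra)).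
  rewrite Rmax_left in * by lra.
  pose proof (ln_gap u v ltac:(lra) ltac:(lra)).
  pose proof (ln_gap (1 - v) (1 - u) ltac:(lra) ltac:(lra)).
  unfold dlfun in Du, Dv.
  set (G := / 2 * / v + / 2 * / (1 - u)) in *.
  set (C := INR p * INR (pred p) * Rmax b2 0 + INR q * INR (pred q) * b3).
  assert (Hslope : (v - u) * G <= (v - u) * C).
  { unfold G, C.
    replace ((v - u) / v) with ((v - u) * / v) in * by (unfold Rdiv; ring).
    replace ((1 - u - (1 - v)) / (1 - u)) with ((v - u) * / (1 - u)) in * by (field; lra).
    nra. }
  apply Rmult_le_reg_l in Hslope; lra.
Qed.

(* Localization of near-maximal points for b1 = -K, with s = l(1) - l(0). *)
Section Localization.

Variables (p q : nat) (K b2 b3 s : R).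
Hypotheses (Hp : (2 <= p)%nat) (Hpq : (p <= q)%nat) (Hb3 : 0 <= b3) (HK : 0 <= K).
Hypothesis Hs : - K + b2 + b3 = s.

Lemma gain_over_0 u : 0 <= u <= 1 -> 0 <= lfun p q (- K) b2 b3 u ->
  K * (u - u ^ p) - s * u ^ p <= ent u.
Proof.
  intros Hu Hl. rewrite lfun_decomp in Hl. unfold poly in Hl.
  pose proof (pow_antitone u p q Hu Hpq).
  assert (b3 * u ^ q <= b3 * u ^ p) by (apply Rmult_le_compat_l; lra).
  replace b2 with (s + K - b3) in Hl by lra. nra.
Qed.

Lemma gain_over_1 u : 0 <= u <= 1 -> lfun p q (- K) b2 b3 1 <= lfun p q (- K) b2 b3 u ->
  K * (u - u ^ p) + s * (1 - u ^ p) <= ent u.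
Proof.
  intros Hu Hl. rewrite !lfun_decomp, ent_1 in Hl. unfold poly in Hl. rewrite !pow1 in Hl.
  pose proof (pow_antitone u p q Hu Hpq).
  assert (b3 * u ^ q <= b3 * u ^ p) by (apply Rmult_le_compat_l; lra).
  replace b2 with (s + K - b3) in Hl by lra. nra.
Qed.

Lemma near_0 u : exp (- K) < - s * (/ 2) ^ p -> 0 < u < 1 ->
  0 <= lfun p q (- K) b2 b3 u -> exp (K - 1) <= / u.
Proof.
  intros HF Hu Hl.
  pose proof (gain_over_0 u ltac:(lra) Hl) as Hgain.
  pose proof (pow_gap p u Hp ltac:(lra)).
  pose proof (pow_unit p u ltac:(lra)).
  assert (Hhalf : 0 < (/ 2) ^ p) by (apply pow_lt; lra).
  pose proof (exp_pos (- K)).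
  assert (Hs0 : 0 < - s) by nra.
  destruct (Rlt_or_le u (/ 2)) as [Hsmall | Hbig].
  - assert (K * (u / 2) <= K * (u - u ^ p)) by (apply Rmult_le_compat_l; nra).
    pose proof (ent_le_linear u Hu).
    assert (Hln : u * K <= u * (1 - ln u)) by nra.
    apply Rmult_le_reg_l in Hln; [| lra].
    apply exp_le_inv; lra.
  - exfalso.
    assert (K * ((1 - u) / 2) <= K * (u - u ^ p)) by (apply Rmult_le_compat_l; nra).
    assert ((/ 2) ^ p <= u ^ p) by (apply pow_incr; lra).
    assert (- s * (/ 2) ^ p <= - s * u ^ p) by (apply Rmult_le_compat_l; lra).
    pose proof (ent_le_shift (1 - u) K ltac:(lra)) as Hshift. rewrite ent_sym in Hshift.
    lra.
Qed.

Lemma near_1 u : exp (- K) < s -> 0 < u < 1 ->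
  lfun p q (- K) b2 b3 1 <= lfun p q (- K) b2 b3 u -> exp (K - 1 + 2 * s) <= / (1 - u).
Proof.
  intros HF Hu Hl.
  pose proof (gain_over_1 u ltac:(lra) Hl) as Hgain.
  pose proof (pow_gap p u Hp ltac:(lra)).
  pose proof (pow_antitone u 1 p ltac:(lra) ltac:(lia)) as Hpu. rewrite pow_1 in Hpu.
  pose proof (exp_pos (- K)).
  destruct (Rle_or_lt u (/ 2)) as [Hsmall | Hbig].
  - exfalso.
    assert (K * (u / 2) <= K * (u - u ^ p)) by (apply Rmult_le_compat_l; nra).
    assert (s * / 2 <= s * (1 - u ^ p)) by (apply Rmult_le_compat_l; lra).
    pose proof (ent_le_shift u K Hu). lra.
  - assert (K * ((1 - u) / 2) <= K * (u - u ^ p)) by (apply Rmult_le_compat_l; nra).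
    assert (s * (1 - u) <= s * (1 - u ^ p)) by (apply Rmult_le_compat_l; lra).
    pose proof (ent_le_linear (1 - u) ltac:(lra)) as Hlin. rewrite ent_sym in Hlin.
    assert (Hln : (1 - u) * (K + 2 * s) <= (1 - u) * (1 - ln (1 - u))) by lra.
    apply Rmult_le_reg_l in Hln; [| lra].
    apply exp_le_inv; lra.
Qed.

End Localization.

Lemma exp_ge_square x : 0 <= x -> (1 + x / 2) ^ 2 <= exp x.
Proof.
  intros Hx. replace x with (x / 2 + x / 2) at 2 by field. rewrite exp_plus.
  pose proof (exp_ineq1_le (x / 2)). simpl. rewrite Rmult_1_r.
  apply Rmult_le_compat; lra.
Qed.

Lemma large_K C1 C2 P : 0 <= C1 -> 0 <= C2 -> 0 < P ->
  exists K0, forall K, K0 < K ->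
    1 <= K /\ exp (- K) < P /\ C1 * K + C2 < exp (K - 1) / 2.
Proof.
  intros HC1 HC2 HP. pose proof (Rinv_0_lt_compat P HP).
  exists (1 + 8 * (C1 + 1) + C1 + C2 + / P). intros K HK.
  split; [lra | split].
  - rewrite exp_Ropp, <- (Rinv_inv P).
    pose proof (exp_ineq1_le K).
    apply Rinv_lt_contravar; [apply Rmult_lt_0_compat; [lra | apply exp_pos] | lra].
  - pose proof (exp_ge_square (K - 1) ltac:(lra)).
    assert ((K - 1) * (C1 + 1) <= (K - 1) * ((K - 1) / 8)) by (apply Rmult_le_compat_l; lra).
    nra.
Qed.

Lemma ordered_maxima p q b1 b2 b3 : (1 <= p)%nat -> (1 <= q)%nat ->
  two_global_max p q b1 b2 b3 ->
  exists u1 u2, 0 < u1 < u2 /\ u2 < 1 /\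
    is_global_max01 (lfun p q b1 b2 b3) u1 /\ is_global_max01 (lfun p q b1 b2 b3) u2.
Proof.
  intros Hp Hq (u1 & u2 & Hne & Hm1 & Hm2).
  pose proof (max_interior p q b1 b2 b3 u1 Hp Hq Hm1).
  pose proof (max_interior p q b1 b2 b3 u2 Hp Hq Hm2).
  destruct (Rlt_or_le u1 u2) as [Hlt | [Hgt | Heq]]; [| | congruence].
  - exists u1, u2. split; [lra |]. split; [lra |]. auto.
  - exists u2, u1. split; [lra |]. split; [lra |]. auto.
Qed.

Section DoubleMaximum.

Variables (p q : nat) (K b2 b3 s u1 u2 : R).
Let C1 := INR p * INR (pred p).
Let C2 := INR q * INR (pred q) * b3.
Hypotheses (Hp : (2 <= p)%nat) (Hpq : (p <= q)%nat) (Hb3 : 0 <= b3) (HK : 1 <= K).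
Hypothesis Hs : - K + b2 + b3 = s.
Hypothesis Hbalance : C1 * K + C2 < exp (K - 1) / 2.
Hypotheses (Hu12 : 0 < u1 < u2) (Hu2 : u2 < 1).
Hypotheses (Hm1 : is_global_max01 (lfun p q (- K) b2 b3) u1)
           (Hm2 : is_global_max01 (lfun p q (- K) b2 b3) u2).

Lemma gap_at_maxima : / 2 * / u2 + / 2 * / (1 - u1) <= C1 * Rmax b2 0 + C2.
Proof.
  exact (critical_points_gap p q (- K) b2 b3 u1 u2 Hb3 Hu12 Hu2
    (critical_point p q _ _ _ u1 ltac:(lra) Hm1)
    (critical_point p q _ _ _ u2 ltac:(lra) Hm2)).
Qed.

Lemma C1_nonneg : 0 <= C1.
Proof. apply Rmult_le_pos; apply pos_INR. Qed.

(* If s << 0, the maximizer u2 is near 0, so 1/u2 exceeds the bound of gap_at_maxima. *)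
Lemma not_below_diagonal : ~ exp (- K) < - s * (/ 2) ^ p.
Proof.
  intros Hfar.
  pose proof gap_at_maxima. pose proof C1_nonneg.
  destruct Hm2 as [Hr2 Hmax2].
  pose proof (Hmax2 0 ltac:(lra)) as Hl. rewrite lfun_at_0 in Hl by lia.
  pose proof (near_0 p q K b2 b3 s Hp Hpq Hb3 ltac:(lra) Hs u2 Hfar ltac:(lra) Hl).
  assert (0 < / (1 - u1)) by (apply Rinv_0_lt_compat; lra).
  assert (0 < - s) by (pose proof (exp_pos (- K)); pose proof (pow_lt (/ 2) p); nra).
  assert (C1 * Rmax b2 0 <= C1 * K) by (apply Rmult_le_compat_l; [| apply Rmax_lub]; lra).
  assert (0 <= C2) by (apply Rmult_le_pos; [apply Rmult_le_pos; apply pos_INR | lra]).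
  lra.
Qed.

(* If s > 0, the maximizer u1 is near 1, so 1/(1-u1) exceeds the bound, since b2^+ <= K + s. *)
Lemma not_above_diagonal : ~ exp (- K) < s.
Proof.
  intros Hfar.
  pose proof gap_at_maxima. pose proof C1_nonneg.
  destruct Hm1 as [Hr1 Hmax1].
  pose proof (Hmax1 1 ltac:(lra)) as Hl.
  pose proof (near_1 p q K b2 b3 s Hp Hpq Hb3 ltac:(lra) Hs u1 Hfar ltac:(lra) Hl).
  assert (0 < / u2) by (apply Rinv_0_lt_compat; lra).
  assert (0 < s) by (pose proof (exp_pos (- K)); lra).
  assert (C1 * Rmax b2 0 <= C1 * (K + s)) by (apply Rmult_le_compat_l; [| apply Rmax_lub]; lra).
  assert (0 <= C2) by (apply Rmult_le_pos; [apply Rmult_le_pos; apply pos_INR | lra]).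
  assert (Hexp2 : exp (K - 1) * (1 + 2 * s) <= exp (K - 1 + 2 * s)).
  { rewrite exp_plus. apply Rmult_le_compat_l; [left; apply exp_pos | apply exp_ineq1_le]. }
  assert (C1 * s <= exp (K - 1) * s) by (apply Rmult_le_compat_r; nra).
  nra.
Qed.

End DoubleMaximum.

Proposition transition_near_diagonal p q b3 e : (2 <= p)%nat -> (p <= q)%nat -> 0 <= b3 ->
  0 < e -> exists K0, forall b1 b2, b1 < - K0 -> two_global_max p q b1 b2 b3 ->
    Rabs (b2 + b1 + b3) <= e.
Proof.
  intros Hp Hpq Hb3 He.
  assert (HC2 : 0 <= INR q * INR (pred q) * b3)
    by (apply Rmult_le_pos; [apply Rmult_le_pos; apply pos_INR | lra]).
  assert (Hhalf : 0 < (/ 2) ^ p) by (apply pow_lt; lra).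
  assert (Hhalf1 : (/ 2) ^ p <= 1) by (apply pow_unit; lra).
  destruct (large_K _ _ (e * (/ 2) ^ p) (C1_nonneg p) HC2 ltac:(nra)) as [K0 HK0].
  exists K0. intros b1 b2 Hb1 Htwo.
  set (K := - b1). destruct (HK0 K ltac:(unfold K; lra)) as (HK & Hexp & Hbalance).
  replace b1 with (- K) in * by (unfold K; ring).
  destruct (ordered_maxima p q (- K) b2 b3 ltac:(lia) ltac:(lia) Htwo)
    as (u1 & u2 & Hu12 & Hu2 & Hm1 & Hm2).
  apply Rabs_le. split; apply Rnot_lt_le; intros Hse.
  - assert (e * (/ 2) ^ p < - (- K + b2 + b3) * (/ 2) ^ p)
      by (apply Rmult_lt_compat_r; lra).
    apply (not_below_diagonal p q K b2 b3 (- K + b2 + b3) u1 u2); auto; lra.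
  - apply (not_above_diagonal p q K b2 b3 (- K + b2 + b3) u1 u2); auto; nra.
Qed.

Theorem corollary4 (p q : nat) (b3 u0 : R) (r : R -> R) :
  (2 <= p)%nat -> (p < q)%nat -> (q <= 5 * p - 1)%nat ->
  0 <= b3 ->
  0 < u0 < 1 ->
  u0_eq p q b3 u0 ->
  (forall u, 0 < u < 1 -> u0_eq p q b3 u -> u = u0) ->
  (forall b1, b1 < beta1c p q u0 ->
     forall b2, two_global_max p q b1 b2 b3 <-> b2 = r b1) ->
  forall eps, 0 < eps ->
    exists M, forall b1, b1 < M -> b1 < beta1c p q u0 ->
      Rabs (Rabs (r b1 + b1 + b3)) < eps.
Proof.
  intros Hp Hpq _ Hb3 _ _ _ Hr eps Heps.
  destruct (transition_near_diagonal p q b3 (eps / 2) Hp ltac:(lia) Hb3 ltac:(lra))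
    as [K0 HK0].
  exists (- K0). intros b1 Hb1 Hc.
  assert (Htwo : two_global_max p q b1 (r b1) b3) by (apply (Hr b1 Hc); reflexivity).
  pose proof (HK0 b1 (r b1) Hb1 Htwo).
  rewrite Rabs_Rabsolu. lra.
Qed.
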